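(* Let $k$ be a positive integer and $G_1,\dots,G_m$ finite subgraphs of $\mathsf{Path}_{\mathbb Z}$ with $G_1\cup\dots\cup G_m=\mathsf{Path}_k$, and let $g:=\mathrm{gap}(G_1,\dots,G_m)$. Then there exists a shift permutation $\sigma$ of $[m]$ such that \[\vec\lambda(G_{\sigma(1)},\dots,G_{\sigma(m)})\ge\frac{g-\max\{\lambda(G_1),\dots,\lambda(G_m)\}}{2}.\]
   Context: Graphs are finite simple graphs without isolated vertices; $\emptyset$ is the empty graph. $\mathsf{Path}_{\mathbb Z}$ has vertex set $\mathbb Z$ and edges $\{i-1,i\}$; for integers $s<t$, $\mathsf{Path}_{s,t}$ has vertices $s,\dots,t$ and edges $\{i-1,i\}$, $s<i\le t$; $\mathsf{Path}_k=\mathsf{Path}_{0,k}$. $\Delta(G)$ = number of connected components; $\lambda(G)$ = maximum number of edges in a component ($0$ for $\emptyset$); $G\ominus F$ = union of components of $G$ sharing no vertex with $F$. $\vec\Delta(H_1,\dots,H_r)=\sum_l\Delta(H_l\ominus(H_1\cup\dots\cup H_{l-1}))$, $\vec\lambda(H_1,\dots,H_r)=\sum_l\lambda(H_l\ominus(H_1\cup\dots\cup H_{l-1}))$. A shift permutation is a permutation $\sigma$ of $[m]$ with $\sigma(j)\ge j-1$ for all $j$. Gap: let $c=\vec\Delta(G_1,\dots,G_m)$ and $0\le s_1<t_1<\dots<s_c<t_c\le k$ the integers with $\bigcup_{j=1}^m\big(G_j\ominus(G_1\cup\dots\cup G_{j-1})\big)=\bigcup_{i=1}^c\mathsf{Path}_{s_i,t_i}$;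 $\mathrm{gap}(G_1,\dots,G_m):=\max_{y\in[0,k]}\min_{i}\big|\frac{s_i+t_i}{2}-y\big|$. *)

From HB Require Import structures.
From mathcomp Require Import all_boot all_order all_algebra all_fingroup.
From mathcomp Require Import finmap.
From mathcomp Require Import boolp classical_sets reals.
Set Implicit Arguments. Unset Strict Implicit. Unset Printing Implicit Defensive.
Import Order.TTheory GRing.Theory Num.Theory.
Local Open Scope fset_scope.
Local Open Scope ring_scope.

(* A finite subgraph of Path_Z without isolated vertices is determined by its
   edge set; the edge {i-1,i} is encoded by the integer i. *)
Definition pgraph := {fset int}.

Definition verts (G : pgraph) : {fset int} := G `|` [fset i - 1 | i in G].

Definition irange (s t : int) : seq int :=
  [seq s + (n%:Z) | n <- iota 1 `|t - s|%N].

Definition path_st (s t : int) : pgraph := [fset i | i in irange s t].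
Definition path_k (k : nat) : pgraph := path_st 0 k%:Z.

(* (s,t) is a connected component of G: G restricted to it is Path_{s,t}
   and it is maximal. *)
Definition is_comp (G : pgraph) (s t : int) : bool :=
  [&& s < t, all (fun i => i \in G) (irange s t), s \notin G & t + 1 \notin G].

Definition comps (G : pgraph) : {fset int * int} :=
  [fset p | p in [seq (x, y) | x <- verts G, y <- verts G] & is_comp G p.1 p.2].

Definition Delta (G : pgraph) : nat := #|` comps G|.

Definition lambda (G : pgraph) : nat :=
  \max_(p <- comps G) `|p.2 - p.1|%N.

(* G ⊖ F: union of components of G sharing no vertex with F *)
Definition ominus (G F : pgraph) : pgraph :=
  [fset i in G | all (fun p : int * int =>
      ~~ ((p.1 < i <= p.2) &&
          has (fun v => p.1 <= v <= p.2) (verts F))) (comps G)].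

(* The sequence of pieces H_l ⊖ (H_1 ∪ ... ∪ H_{l-1}) *)
Fixpoint pieces_aux (prev : pgraph) (H : seq pgraph) : seq pgraph :=
  match H with
  | [::] => [::]
  | h :: H' => ominus h prev :: pieces_aux (prev `|` h) H'
  end.
Definition pieces (H : seq pgraph) : seq pgraph := pieces_aux fset0 H.

Definition vecDelta (H : seq pgraph) : nat := \sum_(P <- pieces H) Delta P.
Definition vecLambda (H : seq pgraph) : nat := \sum_(P <- pieces H) lambda P.

Definition pieces_union (H : seq pgraph) : pgraph :=
  \big[fsetU/fset0]_(P <- pieces H) P.

Definition shift_perm (m : nat) (sigma : 'S_m) : Prop :=
  forall j : 'I_m, (j <= (sigma j).+1)%N.

Definition gap (R : realType) (k : nat) (H : seq pgraph) : R :=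
  let U := pieces_union H in
  let d (y : R) : R :=
    inf [set `|((p.1%:~R + p.2%:~R) / 2 : R) - y| | p in [set p | p \in comps U]] in
  sup [set d y | y in [set y : R | 0 <= y <= k%:R]].

(* Let U be the union of the pieces of G_0, ..., G_{m-1} taken in
   their natural order.  Every component C of a graph G_t lies close to a
   component of U: either C touches no earlier graph, and then it is itself a
   component of U, or we follow it back to the first graph G_{t'} it touches
   and recurse.  Along this chain two shift orders are built alternately: in
   one of them G_t is placed just before the skipped block G_{t'}, ..., G_{t-1},
   so that C survives as a piece there.  Hence the window spanned by the chain
   is at most the sum of the two vecLambda values, i.e. twice the best value
   over shift permutations.  Every y in [0,k] lies on an edge of some G_j, so
   it is within that distance of the midpoint of a component of U, which gives
   gap <= 2 vecLambda(sigma) without using the max lambda(G_j) term. *)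

From HB Require Import structures.
From mathcomp Require Import all_boot all_order all_algebra all_fingroup.
From mathcomp Require Import finmap.
From mathcomp Require Import boolp classical_sets reals.
From mathcomp Require Import zify lra.
Import Order.TTheory GRing.Theory Num.Theory.
Local Open Scope fset_scope.
Local Open Scope ring_scope.
Set Implicit Arguments. Unset Strict Implicit. Unset Printing Implicit Defensive.

Lemma mem_irange (s t x : int) : s <= t -> (x \in irange s t) = (s < x <= t).
Proof.
move=> st; apply/mapP/idP => [[n]|xst].
  by rewrite mem_iota => /andP[n1 n2] ->; apply/andP; split; lia.
by exists `|x - s|%N; [rewrite mem_iota; apply/andP; split | ]; lia.
Qed.

Lemma in_verts (F : pgraph) (v : int) : (v \in verts F) = (v \in F) || (v + 1 \in F).
Proof.
rewrite in_fsetU; congr orb; apply/imfsetP/idP => [[x xF ->]|vF].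
  by rewrite subrK.
by exists (v + 1); rewrite ?addrK.
Qed.

Lemma vertsP (F : pgraph) (v : int) :
  reflect (exists2 x, x \in F & x - 1 <= v <= x) (v \in verts F).
Proof.
rewrite in_verts; apply: (iffP orP) => [[vF | vF] | [x xF xv]].
- by exists v => //; lia.
- by exists (v + 1) => //; lia.
have [<- | <-] : x = v \/ x = v + 1 by lia.
- by left.
- by right.
Qed.

Lemma is_compP (G : pgraph) (s e : int) : reflect
  [/\ s < e, forall x : int, s < x <= e -> x \in G, s \notin G & e + 1 \notin G]
  (is_comp G s e).
Proof.
apply: (iffP and4P) => -[se inG sG eG]; split => //.
  by move=> x xse; apply: (allP inG); rewrite (mem_irange _ (ltW se)).
by apply/allP => x; rewrite (mem_irange _ (ltW se)) => /inG.
Qed.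

Lemma in_comps (G : pgraph) (s e : int) : ((s, e) \in comps G) = is_comp G s e.
Proof.
rewrite inE /=; apply/andP/idP => [[_ ->]//|cse]; split => //.
have /is_compP[se inG _ _] := cse.
apply/allpairsP; exists (s, e); split => //; rewrite in_verts.
  by rewrite (inG (s + 1)) ?orbT //; lia.
by rewrite (inG e) //; lia.
Qed.

Lemma int_fset_bounded (A : {fset int}) : exists B : nat, forall x, x \in A -> (`|x| <= B)%N.
Proof. by exists (\max_(y <- A) `|y|%N) => x xA; apply: leq_bigmax_seq. Qed.

Lemma comp_left_end (G : pgraph) (i : int) : i \in G ->
  exists2 s, s < i & s \notin G /\ forall x, s < x <= i -> x \in G.
Proof.
move=> iG; have [B GB] := int_fset_bounded G.
have ex_out : exists d : nat, i - d%:Z \notin G.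
  by exists (`|i| + B).+1; apply/negP => /GB; lia.
case: (ex_minnP ex_out) => d dG dmin.
have d_gt0 : (0 < d)%N by case: d dG {dmin} => [|d] //; rewrite subr0 iG.
exists (i - d%:Z); first lia.
split => // x xi; apply/negPn/negP => xG.
have := dmin `|i - x|%N; have -> : i - (`|i - x|%N)%:Z = x by lia.
by move/(_ xG); lia.
Qed.

Lemma comp_right_end (G : pgraph) (i : int) : i \in G ->
  exists2 e, i <= e & e + 1 \notin G /\ forall x, i <= x <= e -> x \in G.
Proof.
move=> iG; have [B GB] := int_fset_bounded G.
have ex_out : exists d : nat, i + d%:Z \notin G.
  by exists (`|i| + B).+1; apply/negP => /GB; lia.
case: (ex_minnP ex_out) => d dG dmin.
have d_gt0 : (0 < d)%N by case: d dG {dmin} => [|d] //; rewrite addr0 iG.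
exists (i + d%:Z - 1); first lia.
split; first by rewrite subrK.
move=> x xi; apply/negPn/negP => xG.
have := dmin `|x - i|%N; have -> : i + (`|x - i|%N)%:Z = x by lia.
by move/(_ xG); lia.
Qed.

Lemma comp_exists (G : pgraph) (i : int) : i \in G ->
  exists s e, is_comp G s e /\ s < i <= e.
Proof.
move=> iG; have [s si [sG sinG]] := comp_left_end iG.
have [e ie [eG einG]] := comp_right_end iG.
exists s, e; split; last by rewrite si ie.
apply/is_compP; split => //; first lia.
by move=> x xse; case: (lerP x i) => xi; [apply: sinG | apply: einG]; lia.
Qed.

Lemma comp_uniq (G : pgraph) (s e s' e' i : int) : is_comp G s e -> is_comp G s' e' ->
  s < i <= e -> s' < i <= e' -> s = s' /\ e = e'.
Proof.
move=> /is_compP[se inG sG eG] /is_compP[se' inG' sG' eG'] ise ise'.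
split.
- case: (ltgtP s s') => // lt.
  + by move: sG'; rewrite inG //; lia.
  + by move: sG; rewrite inG' //; lia.
- case: (ltgtP e e') => // lt.
  + by move: eG; rewrite inG' //; lia.
  + by move: eG'; rewrite inG //; lia.
Qed.

Definition touches (F : pgraph) (s e : int) : bool := has (fun v => s <= v <= e) (verts F).

Lemma in_ominus (G F : pgraph) (i : int) : (i \in ominus G F) =
  (i \in G) && all (fun p : int * int => ~~ ((p.1 < i <= p.2) && touches F p.1 p.2)) (comps G).
Proof. by rewrite /ominus inE. Qed.

Lemma mem_ominus_sub (G F : pgraph) (i : int) : i \in ominus G F -> i \in G.
Proof. by rewrite in_ominus => /andP[]. Qed.

Lemma notin_ominus (G F : pgraph) (s e i : int) : is_comp G s e -> s < i <= e ->
  touches F s e -> i \notin ominus G F.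
Proof.
move=> cse ise tF; rewrite in_ominus negb_and; apply/orP; right.
by apply/allPn; exists (s, e); rewrite ?in_comps //= ise negbK.
Qed.

Lemma comp_ominus (G F : pgraph) (s e : int) : is_comp G s e -> ~~ touches F s e ->
  is_comp (ominus G F) s e.
Proof.
move=> cse tF; have /is_compP[se inG sG eG] := cse.
apply/is_compP; split => //.
- move=> x xse; rewrite in_ominus inG //=; apply/allP => -[s' e']; rewrite in_comps /= => cse'.
  apply/negP => /andP[xse'].
  by case: (comp_uniq cse cse' xse xse') => <- <-; rewrite (negbTE tF).
- by apply: contra sG; apply: mem_ominus_sub.
- by apply: contra eG; apply: mem_ominus_sub.
Qed.

Lemma comp_le_lambda (H : pgraph) (s e : int) : is_comp H s e -> e - s <= (lambda H)%:Z.
Proof.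
move=> cse; have /is_compP[se _ _ _] := cse.
have : (`|e - s| <= lambda H)%N.
  by apply: (@leq_bigmax_seq _ _ xpredT (fun p : int * int => `|p.2 - p.1|%N) (s, e));
    rewrite ?in_comps.
lia.
Qed.

Lemma mem_foldl_fsetU (x : int) (A : pgraph) (r : seq pgraph) :
  (x \in foldl fsetU A r) = (x \in A) || has (fun B : pgraph => x \in B) r.
Proof. by elim: r A => [|B r IH] A /=; rewrite ?orbF // IH in_fsetU orbA. Qed.

Lemma pieces_aux_cat (A : pgraph) (r1 r2 : seq pgraph) :
  pieces_aux A (r1 ++ r2) = pieces_aux A r1 ++ pieces_aux (foldl fsetU A r1) r2.
Proof. by elim: r1 A => [|B r1 IH] A //=; rewrite IH. Qed.

(* One-line notation of a shift permutation of [n, e): the concatenation of its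
   cycles, each of the form [b; c; c+1; ...; b-1]. *)
Inductive shift_seq : nat -> nat -> seq nat -> Prop :=
| shift_seq_nil n : shift_seq n n [::]
| shift_seq_cycle n b e l : (n <= b)%N -> shift_seq b.+1 e l ->
    shift_seq n e (b :: iota n (b - n) ++ l).

Lemma shift_seq_leq n e l : shift_seq n e l -> (n <= e)%N.
Proof. by elim=> // {}n b {}e {}l nb _; lia. Qed.

Lemma mem_shift_seq n e l : shift_seq n e l -> forall x, (x \in l) = (n <= x < e)%N.
Proof.
elim=> [{}n x|{}n b {}e {}l nb sl IH x]; first by rewrite in_nil; lia.
by have := shift_seq_leq sl; rewrite in_cons mem_cat mem_iota IH; lia.
Qed.

Lemma shift_seq_uniq n e l : shift_seq n e l -> uniq l.
Proof.
elim=> // {}n b {}e {}l nb sl IH.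
rewrite /= mem_cat mem_iota (mem_shift_seq sl) cat_uniq iota_uniq IH /= andbT.
apply/andP; split; first lia.
by apply/hasPn => x; rewrite mem_iota (mem_shift_seq sl); lia.
Qed.

Lemma size_shift_seq n e l : shift_seq n e l -> size l = (e - n)%N.
Proof.
elim=> [{}n|{}n b {}e {}l nb sl IH]; first by rewrite subnn.
by have := shift_seq_leq sl; rewrite /= size_cat size_iota IH; lia.
Qed.

Lemma shift_seq_nth n e l : shift_seq n e l ->
  forall j, (j < size l)%N -> (n + j <= (nth 0 l j).+1)%N.
Proof.
elim=> // {}n b {}e {}l nb sl IH [|j] /=; first lia.
rewrite size_cat size_iota ltnS nth_cat size_iota => jl.
case: ifP => jb; first by rewrite nth_iota //; lia.
by have := IH (j - (b - n))%N; lia.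
Qed.

Lemma shift_seq_iota n e : (n <= e)%N -> shift_seq n e (iota n (e - n)).
Proof.
move=> /subnKC <-; rewrite addKn; move: (e - n)%N => d; elim: d n => [|d IH] n.
  by rewrite addn0; apply: shift_seq_nil.
by have := shift_seq_cycle (leqnn n) (IH n.+1); rewrite subnn addSnnS.
Qed.

Lemma shift_seq_cat n p e l1 l2 :
  shift_seq n p l1 -> shift_seq p e l2 -> shift_seq n e (l1 ++ l2).
Proof.
elim=> // {}n b {}p {}l1 nb sl1 IH sl2.
by rewrite cat_cons -catA; apply: shift_seq_cycle => //; apply: IH.
Qed.

Lemma perm_of_shift_seq m (l : seq nat) : shift_seq 0 m l ->
  exists2 sigma : 'S_m, shift_perm sigma & [seq val (sigma j) | j <- enum 'I_m] = l.
Proof.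
move=> sl; have sz := size_shift_seq sl; rewrite subn0 in sz.
have l_lt : forall j : 'I_m, (nth 0 l j < m)%N.
  move=> j; have : nth 0 l j \in l by rewrite mem_nth ?sz.
  by rewrite (mem_shift_seq sl).
pose f (j : 'I_m) : 'I_m := Ordinal (l_lt j).
have f_inj : injective f.
  move=> j1 j2 /(congr1 val) /= /eqP; rewrite nth_uniq ?sz ?(shift_seq_uniq sl) //.
  by move=> /eqP; apply: val_inj.
exists (perm f_inj).
  by move=> j; rewrite permE /=; have := shift_seq_nth sl (j := j); rewrite sz; apply.
rewrite -[RHS](mkseq_nth 0) sz /mkseq -val_enum_ord -map_comp.
by apply: eq_map => j /=; rewrite permE.
Qed.

Lemma exists_shift_perm_max m (V : 'S_m -> nat) :
  exists2 sigma : 'S_m, shift_perm sigma & forall tau, shift_perm tau -> (V tau <= V sigma)%N.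
Proof.
pose shiftb (tau : 'S_m) := [forall j : 'I_m, j <= (tau j).+1]%N.
have sh1 : shiftb 1%g by apply/forallP => j; rewrite perm1.
case: (arg_maxnP V sh1) => sigma /forallP sh Vmax.
by exists sigma => // tau shtau; apply: Vmax; apply/forallP.
Qed.

Section Prefixes.

Variable G : nat -> pgraph.

Definition prefU (n : nat) : pgraph := \big[fsetU/fset0]_(0 <= j < n) G j.

Lemma prefUP n x : reflect (exists2 j, (j < n)%N & x \in G j) (x \in prefU n).
Proof.
rewrite /prefU; apply: (iffP (bigfcupP _ _ _ xpredT)) => -[j] jn xG; exists j => //.
  by move: jn; rewrite mem_index_iota; lia.
by rewrite mem_index_iota /=; lia.
Qed.

Lemma prefU0 : prefU 0 = fset0.
Proof. exact: big_geq. Qed.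

Lemma prefUS n : prefU n.+1 = prefU n `|` G n.
Proof. exact: big_nat_recr. Qed.

Lemma verts_prefU n j v : (j < n)%N -> v \in verts (G j) -> v \in verts (prefU n).
Proof.
by move=> jn; rewrite !in_verts => /orP[] vG; apply/orP; [left | right]; apply/prefUP; exists j.
Qed.

Lemma touches_prefUP n s e :
  reflect (exists2 j, (j < n)%N & touches (G j) s e) (touches (prefU n) s e).
Proof.
apply: (iffP hasP) => [[v] | [j jn /hasP[v vG sve]]]; last first.
  by exists v => //; apply: verts_prefU vG.
rewrite in_verts => /orP[] /prefUP[j jn vG] sve; exists j => //; apply/hasP; exists v => //;
  by rewrite in_verts vG ?orbT.
Qed.

Lemma pieces_aux_iota n c : pieces_aux (prefU n) (map G (iota n c)) =
  [seq ominus (G t) (prefU t) | t <- iota n c].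
Proof. by elim: c n => [|c IH] n //=; rewrite -prefUS IH. Qed.

Lemma foldl_shift_seq n e l : shift_seq n e l -> foldl fsetU (prefU n) (map G l) = prefU e.
Proof.
move=> sl; have ne := shift_seq_leq sl; apply/fsetP => x; rewrite mem_foldl_fsetU.
apply/orP/prefUP => [[/prefUP[j jn xG] | /hasP[_ /mapP[j jl ->] xG]] | [j je xG]].
- by exists j => //; lia.
- by exists j => //; move: jl; rewrite (mem_shift_seq sl); lia.
case: (ltnP j n) => jn; first by left; apply/prefUP; exists j.
by right; apply/hasP; exists (G j) => //; apply: map_f; rewrite (mem_shift_seq sl) jn.
Qed.

Definition vlam (n : nat) (l : seq nat) : nat :=
  \sum_(P <- pieces_aux (prefU n) (map G l)) lambda P.

Lemma vecLambda_vlam l : vecLambda (map G l) = vlam 0 l.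
Proof. by rewrite /vlam prefU0. Qed.

Lemma vlam_cat n p l1 l2 : shift_seq n p l1 ->
  vlam n (l1 ++ l2) = (vlam n l1 + vlam p l2)%N.
Proof. by move=> sl1; rewrite /vlam map_cat pieces_aux_cat big_cat (foldl_shift_seq sl1). Qed.

Lemma lambda_le_vlam_cycle n b :
  (lambda (ominus (G b) (prefU n)) <= vlam n (b :: iota n (b - n)))%N.
Proof. by rewrite /vlam big_cons leq_addr. Qed.

Lemma vlam_extend n e m l : shift_seq n e l -> (e <= m)%N ->
  exists2 l', shift_seq n m l' & (vlam n l <= vlam n l')%N.
Proof.
move=> sl em; have sr := shift_seq_iota em.
by exists (l ++ iota e (m - e)); [apply: shift_seq_cat sr | rewrite (vlam_cat _ sl) leq_addr].
Qed.

Variable m : nat.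

Lemma pieces_unionP x : reflect (exists2 t, (t < m)%N & x \in ominus (G t) (prefU t))
  (x \in pieces_union (map G (iota 0 m))).
Proof.
rewrite /pieces_union.
have -> : pieces (map G (iota 0 m)) = [seq ominus (G t) (prefU t) | t <- iota 0 m].
  by rewrite -pieces_aux_iota prefU0.
rewrite big_map.
apply: (iffP (bigfcupP _ _ _ xpredT)) => -[t] tm xG; exists t => //.
  by move: tm; rewrite mem_iota; lia.
by rewrite mem_iota /=; lia.
Qed.

Local Notation U := (pieces_union (map G (iota 0 m))).

Lemma notin_pieces_union t (x v s e : int) : x \notin G t -> v \in verts (G t) ->
  x - 1 <= v <= x -> s <= v <= e -> ~~ touches (prefU t) s e -> x \notin U.
Proof.
move=> xG vG xv sve nt; apply/pieces_unionP => -[t' _ xP]; have xG' := mem_ominus_sub xP.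
case: (ltngtP t' t) => [t't | tt' | t'E]; last by rewrite -t'E xG' in xG.
- move/negP: nt; apply; apply/hasP; exists v => //.
  by apply: (verts_prefU t't); apply/vertsP; exists x.
- have [p1 [p2 [cp xp]]] := comp_exists xG'.
  have T : touches (prefU t') p1 p2 by apply/hasP; exists v; [apply: verts_prefU vG | lia].
  by move/negP: (notin_ominus cp xp T).
Qed.

Lemma comp_pieces_union t (s e : int) : (t < m)%N -> is_comp (G t) s e ->
  ~~ touches (prefU t) s e -> is_comp U s e.
Proof.
move=> tm cse nt; have /is_compP[se inG sG eG] := cse.
have /is_compP[_ inP _ _] := comp_ominus cse nt.
have vG v x : x - 1 <= v <= x -> s < x <= e -> v \in verts (G t).
  by move=> xv xse; apply/vertsP; exists x => //; apply: inG.
apply/is_compP; split => //.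
- by move=> x xse; apply/pieces_unionP; exists t => //; apply: inP.
- by apply: (notin_pieces_union (v := s) sG (vG s (s + 1) _ _) _ _ nt); lia.
- by apply: (notin_pieces_union (v := e) eG (vG e e _ _) _ _ nt); lia.
Qed.

Definition reaches_piece t (s e : int) : Prop :=
  exists (lU lN : seq nat) (s' e' : int),
  [/\ shift_seq 0 t.+1 lU, shift_seq 0 t lN, is_comp U s' e'
    & Num.max e e' - Num.min s s' <= (vlam 0 lU + vlam 0 lN)%N%:Z].

Lemma reaches_piece_free t (s e : int) : (t < m)%N -> is_comp (G t) s e ->
  ~~ touches (prefU t) s e -> reaches_piece t s e.
Proof.
move=> tm cse nt; have s0 := shift_seq_iota (leq0n t); have s1 := shift_seq_iota (leqnSn t).
rewrite subn0 in s0; rewrite subSnn /= in s1.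
exists (iota 0 t ++ [:: t]), (iota 0 t), s, e; split => //.
- exact: shift_seq_cat s0 s1.
- exact: comp_pieces_union tm cse nt.
- have := lambda_le_vlam_cycle t t; rewrite subnn /= => cyc.
  have := comp_le_lambda (comp_ominus cse nt); rewrite (vlam_cat _ s0); lia.
Qed.

(* In the first new order [G t] comes right after [G 0], ..., [G (t'-1)], which
   it does not touch, so [(s, e)] survives as a piece; the two windows overlap
   at [v]. *)
Lemma reaches_piece_step t t' (s e s2 e2 v : int) : (t' < t)%N -> is_comp (G t) s e ->
  ~~ touches (prefU t') s e -> s <= v <= e -> s2 <= v <= e2 ->
  reaches_piece t' s2 e2 -> reaches_piece t s e.
Proof.
move=> t't cse nt sve sve2 [lU [lN [s' [e' [sU sN cU win]]]]].
have sc := shift_seq_cycle (ltnW t't) (shift_seq_nil t.+1); rewrite cats0 in sc.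
have si := shift_seq_iota t't.
exists (lN ++ t :: iota t' (t - t')), (lU ++ iota t'.+1 (t - t'.+1)), s', e'; split => //.
- exact: shift_seq_cat sN sc.
- exact: shift_seq_cat sU si.
- have := lambda_le_vlam_cycle t' t; have := comp_le_lambda (comp_ominus cse nt).
  rewrite (vlam_cat _ sN) (vlam_cat _ sU); lia.
Qed.

Lemma reaches_piece_comp t (s e : int) : (t < m)%N -> is_comp (G t) s e -> reaches_piece t s e.
Proof.
elim/ltn_ind: t s e => t IH s e tm cse.
have [T | nT] := boolP (touches (prefU t) s e); last exact: reaches_piece_free.
have /touches_prefUP[j jt jT] := T.
have exT : exists j, touches (G j) s e by exists j.
case: (ex_minnP exT) => t' t'T t'min.
have t't : (t' < t)%N by have := t'min j jT; lia.
have nT' : ~~ touches (prefU t') s e by apply/touches_prefUP => -[i it' /t'min]; lia.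
have [v /vertsP[x xG xv] sve] := hasP t'T.
have [s2 [e2 [cse2 xse2]]] := comp_exists xG.
have := IH t' t't s2 e2 (ltn_trans t't tm) cse2.
by apply: (reaches_piece_step t't cse nT' sve); lia.
Qed.

Lemma edge_near_piece (V : nat) t (x : int) :
  (forall l, shift_seq 0 m l -> (vlam 0 l <= V)%N) -> (t < m)%N -> x \in G t ->
  exists s' e', is_comp U s' e' /\ Num.max x e' - Num.min (x - 1) s' <= (V + V)%N%:Z.
Proof.
move=> Vmax tm xG; have [s [e [cse xse]]] := comp_exists xG.
have [lU [lN [s' [e' [sU sN cU win]]]]] := reaches_piece_comp tm cse.
have [lU' /Vmax UV leU] := vlam_extend sU tm.
have [lN' /Vmax NV leN] := vlam_extend sN (ltnW tm).
by exists s', e'; split => //; lia.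
Qed.

End Prefixes.

Definition ord_ext m (G : 'I_m -> pgraph) (n : nat) : pgraph :=
  if insub n is Some j then G j else fset0.

Lemma ord_extE m (G : 'I_m -> pgraph) (j : 'I_m) : ord_ext G j = G j.
Proof. by rewrite /ord_ext valK. Qed.

Lemma map_ord_ext m (G : 'I_m -> pgraph) (f : 'I_m -> 'I_m) :
  [seq G (f j) | j <- enum 'I_m] = map (ord_ext G) [seq val (f j) | j <- enum 'I_m].
Proof. by rewrite -map_comp; apply: eq_map => j /=; rewrite ord_extE. Qed.

Lemma exists_edge_window (R : realType) (k : nat) (y : R) : (0 < k)%N -> 0 <= y <= k%:R ->
  exists2 v : int, 0 < v <= k%:Z & (v - 1)%:~R <= y <= v%:~R.
Proof.
move=> k0 /andP[y0 yk]; have yR : y \is Num.real by apply: num_real.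
have [y1 | y1] := lerP y 1.
  by exists 1; [lia | rewrite subrr y0 y1].
exists (Num.ceil y); apply/andP; split.
- by rewrite real_ceil_gt_int //; apply: lt_trans y1; exact: ltr01.
- by rewrite real_ceil_le_int.
- by rewrite ltW // real_ceilB1_lt.
- exact: real_ceil_ge.
Qed.

Lemma mid_dist_le (R : realFieldType) (a b s e : int) (y : R) :
  a <= s -> s <= e -> e <= b -> a%:~R <= y <= b%:~R ->
  `|(s%:~R + e%:~R) / 2 - y| <= (b - a)%:~R.
Proof.
rewrite -!(ler_int R) rmorphB /= => ? ? ? /andP[? ?].
by rewrite ler_norml; apply/andP; split; lra.
Qed.

Lemma window_mid_dist (R : realFieldType) (s e v : int) (c : nat) (y : R) :
  s < e -> (v - 1)%:~R <= y <= v%:~R -> Num.max v e - Num.min (v - 1) s <= c%:Z ->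
  `|(s%:~R + e%:~R) / 2 - y| <= c%:R.
Proof.
move=> se /andP[vy yv] win.
apply: le_trans (mid_dist_le (a := Num.min (v - 1) s) (b := Num.max v e) _ _ _ _) _.
- lia.
- exact: ltW.
- lia.
- by apply/andP; split; [apply: le_trans vy | apply: le_trans yv _]; rewrite ler_int; lia.
- by rewrite -[c%:R]mulrz_nat natz ler_int.
Qed.

Lemma gap_le (R : realType) (k : nat) (H : seq pgraph) (c : R) :
  (forall y : R, 0 <= y <= k%:R -> exists2 p : int * int, p \in comps (pieces_union H) &
     `|(p.1%:~R + p.2%:~R) / 2 - y| <= c) ->
  gap R k H <= c.
Proof.
move=> near; apply: ge_sup; first by eexists; exists 0 => //=; rewrite lexx ler0n.
move=> _ [y y0k <-]; have [p pU py] := near y y0k.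
apply: le_trans py; apply: ge_inf; last by exists p.
by exists 0 => _ [q _ <-]; apply: normr_ge0.
Qed.

Theorem lemma5p9 (R : realType) (k m : nat) (G : 'I_m -> pgraph) :
  (0 < k)%N ->
  \big[fsetU/fset0]_(j < m) G j = path_k k ->
  exists sigma : 'S_m, shift_perm sigma /\
    ((gap R k [seq G j | j <- enum 'I_m]
       - (\max_(j < m) lambda (G j))%:R) / 2
     <= (vecLambda [seq G (sigma j) | j <- enum 'I_m])%:R).
Proof.
move=> k0 GU.
pose V (sigma : 'S_m) := vecLambda [seq G (sigma j) | j <- enum 'I_m].
have [sigma sh Vmax] := exists_shift_perm_max V.
exists sigma; split => //.
have Vbound l : shift_seq 0 m l -> (vlam (ord_ext G) 0 l <= V sigma)%N.
  by case/perm_of_shift_seq => tau shtau <-; rewrite -vecLambda_vlam -map_ord_ext; apply: Vmax.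
suff : gap R k [seq G j | j <- enum 'I_m] <= 2 * (V sigma)%:R.
  by have := ler0n R (\max_(j < m) lambda (G j)); lra.
rewrite (map_ord_ext G id) val_enum_ord.
apply: gap_le => y y0k; have [v v0k vyv] := exists_edge_window k0 y0k.
have /bigfcupP[j _ vG] : v \in \big[fsetU/fset0]_(j < m) G j.
  by rewrite GU inE mem_irange //; lia.
have vG' : v \in ord_ext G j by rewrite ord_extE.
have [s' [e' [cU win]]] := edge_near_piece Vbound (ltn_ord j) vG'.
exists (s', e'); first by rewrite in_comps.
have /is_compP[s'e' _ _ _] := cU.
by apply: le_trans (window_mid_dist s'e' vyv win) _; rewrite natrD; lra.
Qed.
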